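(* For a monoid $M$, the following statements are equivalent. (a) $M$ can be embedded into a free commutative monoid of finite rank. (b) $M$ has finite rank and can be embedded into a free commutative monoid (of possibly infinite rank). (c) There exists $d\in\mathbb{N}$ such that $M$ is isomorphic to a submonoid of $(\mathbb{N}^d,+)$ of rank $d$ (a maximal-rank submonoid).
   Context: Convention: all monoids are commutative, cancellative, and reduced (the identity $0$ is the only invertible element), and are written additively. $\mathrm{gp}(M)$ denotes the Grothendieck group of $M$, and the rank of $M$, $\mathrm{rank}(M)$, is the rank of the $\mathbb{Z}$-module $\mathrm{gp}(M)$ (i.e. $\dim_\mathbb{Q}\mathbb{Q}\otimes_\mathbb{Z}\mathrm{gp}(M)$). $\mathbb{N}=\{0,1,2,\dots\}$. *)

From Stdlib Require Import ZArith List ProofIrrelevance FunctionalExtensionality.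
From HB Require Import structures.
From mathcomp Require Import all_boot.
Set Implicit Arguments. Unset Strict Implicit. Unset Printing Implicit Defensive.

(* A monoid in the sense of the paper: commutative, cancellative, reduced,
   written additively. *)
Record cmonoid := CMonoid {
  carrier :> Type;
  mzero : carrier;
  madd : carrier -> carrier -> carrier;
  maddA : forall x y z, madd x (madd y z) = madd (madd x y) z;
  maddC : forall x y, madd x y = madd y x;
  madd0 : forall x, madd mzero x = x;
  mcancel : forall x y z, madd x y = madd x z -> y = z;
  mreduced : forall x y, madd x y = mzero -> x = mzero
}.

Definition is_hom (M N : cmonoid) (f : M -> N) : Prop :=
  f (mzero M) = mzero N /\ forall x y, f (madd x y) = madd (f x) (f y).

Definition embeds (M N : cmonoid) : Prop :=
  exists f : M -> N, is_hom f /\ forall x y, f x = f y -> x = y.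

Definition isomorphic (M N : cmonoid) : Prop :=
  exists (f : M -> N) (g : N -> M), is_hom f /\ cancel f g /\ cancel g f.

Fixpoint nsmul (M : cmonoid) (n : nat) (x : M) : M :=
  match n with O => mzero M | S k => madd x (nsmul k x) end.

(* Elements of gp(M) are represented by pairs (a, b), standing for a - b.
   For integer coefficients c_i, the relation  sum_i c_i (a_i - b_i) = 0 in gp(M)
   holds iff  lhs = rhs  in M (M cancellative), where c = c^+ - c^-. *)
Fixpoint gp_comb_lhs (M : cmonoid) (cs : list Z) (ps : list (M * M)) : M :=
  match cs, ps with
  | c :: cs', (a, b) :: ps' =>
      madd (madd (nsmul (Z.to_nat c) a) (nsmul (Z.to_nat (- c)) b))
           (gp_comb_lhs cs' ps')
  | _, _ => mzero M
  end.

Fixpoint gp_comb_rhs (M : cmonoid) (cs : list Z) (ps : list (M * M)) : M :=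
  match cs, ps with
  | c :: cs', (a, b) :: ps' =>
      madd (madd (nsmul (Z.to_nat c) b) (nsmul (Z.to_nat (- c)) a))
           (gp_comb_rhs cs' ps')
  | _, _ => mzero M
  end.

Definition gp_indep (M : cmonoid) (ps : list (M * M)) : Prop :=
  forall cs : list Z, length cs = length ps ->
    gp_comb_lhs cs ps = gp_comb_rhs cs ps -> Forall (fun c => c = 0%Z) cs.

(* rank(M) = rank of the Z-module gp(M) = maximal size of a Z-linearly
   independent family in gp(M). *)
Definition has_rank (M : cmonoid) (r : nat) : Prop :=
  (exists ps : list (M * M), length ps = r /\ gp_indep ps) /\
  (forall ps : list (M * M), gp_indep ps -> length ps <= r)%coq_nat.

Definition finite_rank (M : cmonoid) : Prop := exists r, has_rank M r.

Section FreeN.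
Variable d : nat.
Let T := {ffun 'I_d -> nat}.
Definition fN0 : T := [ffun=> 0%N].
Definition fNadd (f g : T) : T := [ffun i => (f i + g i)%N].

Lemma fNaddA x y z : fNadd x (fNadd y z) = fNadd (fNadd x y) z.
Proof. by apply/ffunP=> i; rewrite !ffunE addnA. Qed.
Lemma fNaddC x y : fNadd x y = fNadd y x.
Proof. by apply/ffunP=> i; rewrite !ffunE addnC. Qed.
Lemma fNadd0 x : fNadd fN0 x = x.
Proof. by apply/ffunP=> i; rewrite !ffunE. Qed.
Lemma fNcancel x y z : fNadd x y = fNadd x z -> y = z.
Proof.
move=> H; apply/ffunP=> i; have := congr1 (fun f : {ffun 'I_d -> nat} => f i) H.
by rewrite !ffunE => /eqP; rewrite eqn_add2l => /eqP.
Qed.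
Lemma fNreduced x y : fNadd x y = fN0 -> x = fN0.
Proof.
move=> H; apply/ffunP=> i; have := congr1 (fun f : {ffun 'I_d -> nat} => f i) H.
by rewrite !ffunE; case: (x i).
Qed.
End FreeN.

Definition freeN (d : nat) : cmonoid :=
  @CMonoid {ffun 'I_d -> nat} (fN0 d) (@fNadd d)
    (@fNaddA d) (@fNaddC d) (@fNadd0 d) (@fNcancel d) (@fNreduced d).

Lemma sig_eq_pi (A : Type) (P : A -> Prop) (x y : {a | P a}) :
  proj1_sig x = proj1_sig y -> x = y.
Proof.
case: x y => [a Ha] [b Hb] /= E; subst b.
by rewrite (proof_irrelevance _ Ha Hb).
Qed.

Section Sub.
Variables (M : cmonoid) (P : M -> Prop) (H0 : P (mzero M))
  (HD : forall x y, P x -> P y -> P (madd x y)).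
Let T := {x : M | P x}.
Definition sub0 : T := exist _ (mzero M) H0.
Definition subadd (x y : T) : T :=
  exist _ (madd (proj1_sig x) (proj1_sig y)) (HD (proj2_sig x) (proj2_sig y)).
Lemma subaddA x y z : subadd x (subadd y z) = subadd (subadd x y) z.
Proof. by apply: sig_eq_pi; rewrite /= maddA. Qed.
Lemma subaddC x y : subadd x y = subadd y x.
Proof. by apply: sig_eq_pi; rewrite /= maddC. Qed.
Lemma subadd0 x : subadd sub0 x = x.
Proof. by apply: sig_eq_pi; rewrite /= madd0. Qed.
Lemma subcancel x y z : subadd x y = subadd x z -> y = z.
Proof.
move=> H; apply: sig_eq_pi; have := congr1 (@proj1_sig _ _) H.
exact: mcancel.
Qed.
Lemma subreduced x y : subadd x y = sub0 -> x = sub0.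
Proof.
move=> H; apply: sig_eq_pi; have := congr1 (@proj1_sig _ _) H.
exact: mreduced.
Qed.
End Sub.

Definition submonoid (M : cmonoid) (P : M -> Prop) (H0 : P (mzero M))
  (HD : forall x y, P x -> P y -> P (madd x y)) : cmonoid :=
  @CMonoid {x : M | P x} (sub0 H0) (subadd HD)
    (@subaddA M P HD) (@subaddC M P HD) (@subadd0 M P H0 HD)
    (@subcancel M P HD) (@subreduced M P H0 HD).

Section FreeI.
Variable I : Type.
Definition finsupp (f : I -> nat) : Prop :=
  exists s : list I, forall i, f i <> 0%N -> List.In i s.
Let T := {f : I -> nat | finsupp f}.
Lemma finsupp0 : finsupp (fun _ => 0%N).
Proof. by exists nil. Qed.
Lemma finsuppD f g : finsupp f -> finsupp g -> finsupp (fun i => (f i + g i)%N).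
Proof.
move=> [s Hs] [t Ht]; exists (s ++ t) => i Hi; apply/in_or_app.
case E: (f i) => [|n] in Hi *; last by left; apply: Hs; rewrite E.
by right; apply: Ht.
Qed.
Definition fI0 : T := exist _ _ finsupp0.
Definition fIadd (f g : T) : T :=
  exist _ _ (finsuppD (proj2_sig f) (proj2_sig g)).
Lemma fIaddA x y z : fIadd x (fIadd y z) = fIadd (fIadd x y) z.
Proof. by apply: sig_eq_pi; apply: functional_extensionality => i /=; rewrite addnA. Qed.
Lemma fIaddC x y : fIadd x y = fIadd y x.
Proof. by apply: sig_eq_pi; apply: functional_extensionality => i /=; rewrite addnC. Qed.
Lemma fIadd0 x : fIadd fI0 x = x.
Proof. by apply: sig_eq_pi; apply: functional_extensionality => i. Qed.
Lemma fIcancel x y z : fIadd x y = fIadd x z -> y = z.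
Proof.
move=> H; apply: sig_eq_pi; apply: functional_extensionality => i.
have := congr1 (fun f => proj1_sig f i) H => /= /eqP.
by rewrite eqn_add2l => /eqP.
Qed.
Lemma fIreduced x y : fIadd x y = fI0 -> x = fI0.
Proof.
move=> H; apply: sig_eq_pi; apply: functional_extensionality => i.
have := congr1 (fun f => proj1_sig f i) H => /=.
by case: (proj1_sig x i).
Qed.
End FreeI.

Definition free_cmonoid (I : Type) : cmonoid :=
  @CMonoid {f : I -> nat | finsupp f} (@fI0 I) (@fIadd I)
    (@fIaddA I) (@fIaddC I) (@fIadd0 I) (@fIcancel I) (@fIreduced I).

From Stdlib Require Import ZArith List Lia Classical ClassicalEpsilon FunctionalExtensionality.
From mathcomp Require Import all_boot zify.
Set Implicit Arguments. Unset Strict Implicit.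

(* An injective homomorphism M -> N^d makes gp(M) a subgroup of Z^d, so Gaussian
   elimination bounds independent families by d; and N^d sits inside the free
   monoid on d generators.  Conversely, if M embeds in a free monoid and has finite
   rank, fix a maximal independent family: every element is rationally dependent
   on it, so its image vanishes outside the finitely many coordinates the family
   uses, and restricting to those coordinates is still injective.  Finally, given
   M -> N^d, call a coordinate j separated when some x, y have images differing
   exactly at j.  An unseparated coordinate can be deleted without losing
   injectivity; once every coordinate is separated, the separating differences
   form a diagonal, hence independent, family of size d, so M has rank d and is
   isomorphic to its image. *)

Lemma List_nthE (T : Type) (x0 : T) s i : List.nth i s x0 = nth x0 s i.
Proof. by elim: s i => [|x s IH] [|i] /=. Qed.

Section IntegerVectors.

(* Integer vectors are functions [nat -> Z]; a statement about Z^d just quantifies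
   over the coordinates j < d. *)
Implicit Types (cs : list Z) (vs : list (nat -> Z)).

Fixpoint zcomb cs vs (j : nat) : Z :=
  match cs, vs with
  | c :: cs', v :: vs' => (c * v j + zcomb cs' vs' j)%Z
  | _, _ => 0%Z
  end.

Lemma zcomb_scale a cs vs j : zcomb (map (Z.mul a) cs) vs j = (a * zcomb cs vs j)%Z.
Proof. by elim: cs vs => [|c cs IH] [|v vs] //=; rewrite ?IH; ring. Qed.

Lemma zcomb_pivot a c cs1 cs2 pre v post j : size cs1 = size pre ->
  zcomb (map (Z.mul a) cs1 ++ c :: map (Z.mul a) cs2) (pre ++ v :: post) j =
  (a * zcomb (cs1 ++ cs2) (pre ++ post) j + c * v j)%Z.
Proof.
elim: cs1 pre => [|c1 cs1 IH] [|u pre] //=; last by move=> [/IH ->]; ring.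
by move=> _; rewrite zcomb_scale; ring.
Qed.

Lemma zcomb_eliminate a d v cs us j :
  zcomb cs (map (fun u k => (a * u k - u d * v k)%Z) us) j =
  (a * zcomb cs us j - zcomb cs us d * v j)%Z.
Proof. by elim: cs us => [|c cs IH] [|u us] //=; rewrite ?IH; ring. Qed.

Lemma zcomb_eq0 cs vs j : (forall v, In v vs -> v j = 0%Z) -> zcomb cs vs j = 0%Z.
Proof.
elim: cs vs => [|c cs IH] [|u us] //= H.
rewrite H ?IH; first lia; last by left.
by move=> w Hw; apply: H; right.
Qed.

Lemma zcomb_single cs vs j i v0 : size cs = size vs -> i < size vs ->
  (forall i', i' < size vs -> i' != i -> nth v0 vs i' j = 0%Z) ->
  zcomb cs vs j = (nth 0%Z cs i * nth v0 vs i j)%Z.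
Proof.
elim: cs vs i => [|c cs IH] [|v vs] [|i] //= [Hs] Hi H.
  rewrite zcomb_eq0 ?Z.add_0_r // => w /(In_nth _ _ v0) [i' [Hi' <-]].
  by rewrite List_nthE; apply: (H i'.+1) => //; rewrite ltnS; apply/ltP.
have /= -> := H 0 erefl erefl; rewrite (IH vs i) //; first lia.
by move=> i' Hi'; apply: (H i'.+1).
Qed.

(* Gaussian elimination over Z: clear coordinate d with a pivot, then recurse. *)
Lemma zvectors_dependent d vs : d < size vs ->
  exists cs, size cs = size vs /\ (exists2 c, In c cs & c <> 0%Z) /\
    forall j, j < d -> zcomb cs vs j = 0%Z.
Proof.
elim: d vs => [|d IH] vs Hvs.
  case: vs Hvs => [|v vs] // _.
  exists (1%Z :: nseq (size vs) 0%Z); rewrite /= size_nseq.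
  by split=> //; split=> //; exists 1%Z; [left|].
have [[v Hv Hvd]|Hno] := classic (exists2 v, In v vs & v d <> 0%Z); last first.
  have [cs [Hs [Hnz Hz]]] := IH vs (ltnW Hvs).
  exists cs; split=> //; split=> // j.
  rewrite ltnS leq_eqVlt => /orP[/eqP ->|]; last exact: Hz.
  by apply: zcomb_eq0 => u Hu; apply: NNPP => Hud; apply: Hno; exists u.
have [pre [post Evs]] := in_split _ _ Hv; subst vs.
set us := pre ++ post.
set ws := map (fun u k => (v d * u k - u d * v k)%Z) us.
have [|cs [Hs [[c Hc Hc0] Hz]]] := IH ws.
  by rewrite size_map size_cat; move: Hvs; rewrite size_cat /=; lia.
have [cs1 [cs2 [Ecs Hs1]]] : exists cs1 cs2, cs = cs1 ++ cs2 /\ size cs1 = size pre.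
  exists (take (size pre) cs), (drop (size pre) cs); rewrite cat_take_drop size_take.
  by split=> //; move: Hs; rewrite size_map size_cat; case: ltnP; lia.
subst cs.
exists (map (Z.mul (v d)) cs1 ++ (- zcomb (cs1 ++ cs2) us d)%Z :: map (Z.mul (v d)) cs2).
split.
  by move: Hs; rewrite !size_cat /= !size_map size_cat; lia.
split.
  exists (v d * c)%Z; last by move/Z.mul_eq_0 => [].
  have [H|H] := in_app_or _ _ _ Hc; apply: in_or_app; [left|right; right]; exact: in_map.
move=> j Hj; rewrite zcomb_pivot // -/us.
have := zcomb_eliminate (v d) d v (cs1 ++ cs2) us j.
suff -> : zcomb (cs1 ++ cs2) ws j = 0%Z by lia.
move: Hj; rewrite ltnS leq_eqVlt => /orP[/eqP ->|/Hz //].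
by rewrite zcomb_eliminate; lia.
Qed.

End IntegerVectors.

Lemma bounded_prop_max (P : nat -> Prop) m : P 0 -> (forall n, P n -> n <= m) ->
  exists r, P r /\ forall n, P n -> n <= r.
Proof.
move=> P0; elim: m => [|m IH] Hm; first by exists 0.
have [Pm|nPm] := classic (P m.+1); first by exists m.+1.
apply: IH => n Pn; have := Hm n Pn; rewrite leq_eqVlt => /orP[/eqP En|//].
by rewrite En in Pn.
Qed.

Definition map_pair (M N : cmonoid) (f : M -> N) (p : M * M) : N * N := (f p.1, f p.2).

Section Homomorphisms.

Variables (M N : cmonoid) (f : M -> N).
Hypothesis f_hom : is_hom f.

Lemma hom_nsmul n x : f (nsmul n x) = nsmul n (f x).
Proof. by case: f_hom => f0 fD; elim: n => [|n IH] /=; rewrite ?f0 ?fD ?IH. Qed.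

Lemma hom_gp_comb_lhs cs ps : f (gp_comb_lhs cs ps) = gp_comb_lhs cs (map (map_pair f) ps).
Proof.
case: f_hom => f0 fD.
by elim: cs ps => [|c cs IH] [|[a b] ps] //=; rewrite !fD IH !hom_nsmul.
Qed.

Lemma hom_gp_comb_rhs cs ps : f (gp_comb_rhs cs ps) = gp_comb_rhs cs (map (map_pair f) ps).
Proof.
case: f_hom => f0 fD.
by elim: cs ps => [|c cs IH] [|[a b] ps] //=; rewrite !fD IH !hom_nsmul.
Qed.

Lemma gp_indep_of_map ps : gp_indep (map (map_pair f) ps) -> gp_indep ps.
Proof.
move=> Hind cs Hs E; apply: Hind; first by rewrite Hs length_map.
by rewrite -hom_gp_comb_lhs -hom_gp_comb_rhs E.
Qed.

Lemma gp_indep_map ps : injective f -> gp_indep ps -> gp_indep (map (map_pair f) ps).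
Proof.
move=> f_inj Hind cs Hs E; rewrite length_map in Hs; apply: Hind => //.
by apply: f_inj; rewrite hom_gp_comb_lhs hom_gp_comb_rhs.
Qed.

End Homomorphisms.

Lemma has_rank_iso (M N : cmonoid) (f : M -> N) (g : N -> M) r :
  is_hom f -> cancel f g -> cancel g f -> has_rank M r -> has_rank N r.
Proof.
move=> f_hom fK gK [[ps [Hs Hind]] Hmax]; split.
  exists (map (map_pair f) ps); split; first by rewrite length_map.
  exact: gp_indep_map (can_inj fK) Hind.
move=> qs Hqs.
have Eqs : qs = map (map_pair f) (map (map_pair g) qs).
  by rewrite -map_comp -[LHS]map_id; apply: eq_map => -[a b]; rewrite /map_pair /= !gK.
rewrite Eqs in Hqs; have := Hmax _ (gp_indep_of_map f_hom Hqs).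
by rewrite !length_map.
Qed.

Lemma hom_comp (M N K : cmonoid) (f : M -> N) (g : N -> K) :
  is_hom f -> is_hom g -> is_hom (g \o f).
Proof. by move=> [f0 fD] [g0 gD]; split=> [|x y] /=; rewrite ?f0 ?g0 ?fD ?gD. Qed.

Lemma embeds_trans (M N K : cmonoid) : embeds M N -> embeds N K -> embeds M K.
Proof.
move=> [f [f_hom f_inj]] [g [g_hom g_inj]]; exists (g \o f).
by split; [exact: hom_comp | exact: inj_comp].
Qed.

Lemma nsmul_freeN d n (x : freeN d) i : (nsmul n x : freeN d) i = (n * x i)%N.
Proof. by elim: n => [|n IH] /=; rewrite ffunE ?IH. Qed.

(* The vector of p.1 - p.2 in Z^d, padded with zeros beyond d. *)
Definition zdiff d (p : freeN d * freeN d) (j : nat) : Z :=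
  if insub j is Some i then (Z.of_nat (p.1 i) - Z.of_nat (p.2 i))%Z else 0%Z.

Lemma zdiff_ord d p (i : 'I_d) : zdiff p i = (Z.of_nat (p.1 i) - Z.of_nat (p.2 i))%Z.
Proof. by rewrite /zdiff valK. Qed.

Lemma gp_comb_freeN_coord d cs (qs : list (freeN d * freeN d)) (i : 'I_d) :
  (Z.of_nat (gp_comb_lhs cs qs i) - Z.of_nat (gp_comb_rhs cs qs i))%Z =
  zcomb cs (map (@zdiff d) qs) i.
Proof.
elim: cs qs => [|c cs IH] [|[a b] qs] /=; try lia.
rewrite /fNadd !ffunE !nsmul_freeN -IH zdiff_ord /=; lia.
Qed.

Lemma gp_indep_size_le_freeN d (M : cmonoid) (ps : list (M * M)) :
  embeds M (freeN d) -> gp_indep ps -> size ps <= d.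
Proof.
move=> [f [f_hom f_inj]] Hind; rewrite leqNgt; apply/negP => Hlt.
pose vs := map (@zdiff d) (map (map_pair f) ps).
have [|cs [Hs [[c Hc Hc0] Hz]]] := @zvectors_dependent d vs; first by rewrite !size_map.
rewrite !size_map in Hs.
suff /Forall_forall Hcs : Forall (fun c => c = 0%Z) cs by exact: Hc0 (Hcs c Hc).
apply: Hind => //; apply: f_inj; rewrite hom_gp_comb_lhs // hom_gp_comb_rhs //.
apply/ffunP => i; apply: Nat2Z.inj; apply/Z.sub_move_0_r.
by rewrite gp_comb_freeN_coord Hz.
Qed.

Lemma finite_rank_of_embeds_freeN d (M : cmonoid) : embeds M (freeN d) -> finite_rank M.
Proof.
move=> Hemb.
pose P n := exists ps : list (M * M), length ps = n /\ gp_indep ps.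
have [||r [[ps [Hs Hind]] Hmax]] := @bounded_prop_max P d.
- by exists nil; split=> // -[|c cs].
- by move=> n [ps [<- Hind]]; exact: gp_indep_size_le_freeN Hemb Hind.
exists r; split; first by exists ps.
by move=> qs Hqs; apply/leP; apply: Hmax; exists qs.
Qed.

Definition separates d (M : cmonoid) (f : M -> freeN d) (j : 'I_d) (p : M * M) : Prop :=
  f p.1 j <> f p.2 j /\ forall k, k != j -> f p.1 k = f p.2 k.

Lemma gp_indep_separating d (M : cmonoid) (f : M -> freeN d) (P : 'I_d -> M * M) :
  is_hom f -> (forall j, separates f j (P j)) -> gp_indep (map P (enum 'I_d)).
Proof.
move=> f_hom HP cs Hs E; apply/Forall_nth => i c0; rewrite List_nthE => /leP Hi.
have size_cs : size cs = d by rewrite -(size_enum_ord d) -(size_map P); exact: Hs.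
have Hid : i < d by rewrite -size_cs.
pose j := Ordinal Hid.
pose vs := map (fun k => zdiff (map_pair f (P k))) (enum 'I_d).
have size_vs : size vs = d by rewrite size_map size_enum_ord.
have nth_vs (k : 'I_d) : nth (zdiff (map_pair f (P j))) vs k = zdiff (map_pair f (P k)).
  by rewrite (nth_map j) ?nth_ord_enum ?size_enum_ord.
have := gp_comb_freeN_coord cs (map (map_pair f) (map P (enum 'I_d))) j.
rewrite -hom_gp_comb_lhs // -hom_gp_comb_rhs // E Z.sub_diag -2!map_comp -/vs.
rewrite (@zcomb_single _ _ _ i (zdiff (map_pair f (P j)))) ?size_vs ?size_cs //; last first.
  move=> i' Hi' Hne; rewrite -[i']/(val (Ordinal Hi')) nth_vs zdiff_ord.
  rewrite (proj2 (HP _)) ?Z.sub_diag //.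
  by apply: contra Hne => /eqP/(congr1 val) /= ->.
rewrite -[i]/(val j) nth_vs zdiff_ord (set_nth_default 0%Z) ?size_cs //.
by case: (HP j) => Hj _ /esym /Z.mul_eq_0 [] // /Z.sub_move_0_r /Nat2Z.inj.
Qed.

Lemma has_rank_separating d (M : cmonoid) (f : M -> freeN d) :
  is_hom f -> injective f -> (forall j, exists p, separates f j p) -> has_rank M d.
Proof.
move=> f_hom f_inj Hsep.
pose P j := proj1_sig (constructive_indefinite_description _ (Hsep j)).
split.
  exists (map P (enum 'I_d)); split; first by rewrite -[RHS](size_enum_ord d) -(size_map P).
  apply: gp_indep_separating f_hom _ => j.
  exact: proj2_sig (constructive_indefinite_description _ (Hsep j)).
move=> ps Hind; apply/leP; apply: gp_indep_size_le_freeN Hind.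
by exists f.
Qed.

Lemma embeds_drop_unseparated d (M : cmonoid) (f : M -> freeN d.+1) (j : 'I_d.+1) :
  is_hom f -> injective f -> ~ (exists p, separates f j p) -> embeds M (freeN d).
Proof.
move=> [f0 fD] f_inj Hj.
exists (fun x => [ffun k => f x (lift j k)] : freeN d); split.
  by split=> [|x y]; apply/ffunP => k; rewrite !ffunE ?f0 ?fD /= !ffunE.
move=> x y /ffunP Exy; apply: f_inj; apply/ffunP => k.
have Hoff l : l != j -> f x l = f y l.
  rewrite eq_sym => /unlift_some [l' -> _].
  by have := Exy l'; rewrite !ffunE.
have [->|/Hoff //] := eqVneq k j.
by apply: NNPP => Hne; apply: Hj; exists (x, y).
Qed.

Lemma embeds_freeN_full_rank d (M : cmonoid) :
  embeds M (freeN d) -> exists r, has_rank M r /\ embeds M (freeN r).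
Proof.
elim: d => [|d IH] [f [f_hom f_inj]].
  by exists 0; split; [apply: has_rank_separating f_hom f_inj _ => -[] | exists f].
have [Hsep|] := classic (forall j, exists p, separates f j p).
  by exists d.+1; split; [exact: has_rank_separating f_hom f_inj Hsep | exists f].
by case/not_all_ex_not => j /(embeds_drop_unseparated f_hom f_inj); exact: IH.
Qed.

Lemma isomorphic_image d (M : cmonoid) (f : M -> freeN d) : is_hom f -> injective f ->
  exists (P : freeN d -> Prop) (H0 : P (mzero (freeN d)))
         (HD : forall x y, P x -> P y -> P (madd x y)), isomorphic M (submonoid H0 HD).
Proof.
move=> [f0 fD] f_inj.
pose P z := exists x, f x = z.
have H0 : P (mzero (freeN d)) by exists (mzero M).
have HD x y : P x -> P y -> P (madd x y) by move=> [a <-] [b <-]; exists (madd a b).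
pose g (x : M) : submonoid H0 HD := exist P (f x) (ex_intro _ x erefl).
pose h (z : submonoid H0 HD) : M :=
  proj1_sig (constructive_indefinite_description _ (proj2_sig z)).
have fh z : f (h z) = proj1_sig z.
  exact: proj2_sig (constructive_indefinite_description _ (proj2_sig z)).
exists P, H0, HD, g, h; split.
  by split=> [|x y]; apply: sig_eq_pi; rewrite /= ?f0 ?fD.
by split=> [x|z]; [apply: f_inj; rewrite fh | apply: sig_eq_pi; rewrite /= fh].
Qed.

Lemma isomorphic_embeds (M N : cmonoid) : isomorphic M N -> embeds M N.
Proof. by move=> [f [g [f_hom [fK _]]]]; exists f; split; last exact: can_inj fK. Qed.

Lemma submonoid_embeds (M : cmonoid) (P : M -> Prop) (H0 : P (mzero M))
  (HD : forall x y, P x -> P y -> P (madd x y)) : embeds (submonoid H0 HD) M.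
Proof. by exists (@proj1_sig _ _); split; last exact: sig_eq_pi. Qed.

Lemma In_mem (T : eqType) (s : seq T) x : x \in s -> In x s.
Proof. by elim: s => //= y s IH; rewrite in_cons => /orP[/eqP ->|/IH]; [left|right]. Qed.

Lemma freeN_embeds_free d : embeds (freeN d) (free_cmonoid 'I_d).
Proof.
have fin (x : freeN d) : finsupp (fun i => x i).
  by exists (enum 'I_d) => i _; apply: In_mem; rewrite mem_enum.
exists (fun x => exist _ _ (fin x) : free_cmonoid 'I_d); split.
  by split=> [|x y]; apply: sig_eq_pi; apply: functional_extensionality => i /=; rewrite ffunE.
by move=> x y /(congr1 (@proj1_sig _ _)) Exy; apply/ffunP => i; exact: equal_f Exy i.
Qed.

Lemma nsmul_free (I : Type) n (x : free_cmonoid I) j :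
  proj1_sig (nsmul n x : free_cmonoid I) j = (n * proj1_sig x j)%N.
Proof. by elim: n => [|n IH] //=; rewrite IH. Qed.

Lemma gp_comb_free_vanish (I : Type) cs (qs : list (free_cmonoid I * free_cmonoid I)) j :
  (forall p, In p qs -> proj1_sig p.1 j = 0 /\ proj1_sig p.2 j = 0) ->
  proj1_sig (gp_comb_lhs cs qs) j = 0 /\ proj1_sig (gp_comb_rhs cs qs) j = 0.
Proof.
elim: cs qs => [|c cs IH] [|[a b] qs] //= H.
have [Ha Hb] := H (a, b) (or_introl erefl).
have [Hl Hr] := IH qs (fun p Hp => H p (or_intror Hp)).
by rewrite !nsmul_free Ha Hb Hl Hr !muln0.
Qed.

Lemma finsupp_pairs (I : Type) (qs : list (free_cmonoid I * free_cmonoid I)) :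
  exists S : list I, forall p j, In p qs -> ~ In j S ->
    proj1_sig p.1 j = 0 /\ proj1_sig p.2 j = 0.
Proof.
elim: qs => [|[a b] qs [S HS]]; first by exists nil.
have [[sa Ha] [sb Hb]] := (proj2_sig a, proj2_sig b).
exists (sa ++ sb ++ S) => p j /= Hp HjS.
have [HjA [HjB HjS']] : ~ In j sa /\ ~ In j sb /\ ~ In j S.
  by split; [|split] => H; apply: HjS; rewrite ?in_app_iff; tauto.
case: Hp => [<-|Hp]; last exact: HS.
by split; apply: NNPP; [move/Ha | move/Hb].
Qed.

Lemma hom_free_vanish_off (M : cmonoid) (I : Type) (f : M -> free_cmonoid I) ps x j :
  is_hom f -> gp_indep ps -> ~ gp_indep ((x, mzero M) :: ps) ->
  (forall p, In p ps -> proj1_sig (f p.1) j = 0 /\ proj1_sig (f p.2) j = 0) ->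
  proj1_sig (f x) j = 0.
Proof.
move=> f_hom Hind Hdep Hps.
have [cs Hcs] := not_all_ex_not _ _ Hdep.
have [Hs Hcs'] := imply_to_and _ _ Hcs.
have [E HnF] := imply_to_and _ _ Hcs'; clear Hcs Hcs'.
case: cs Hs E HnF => [|c cs] //= [Hs] E HnF.
have [Hc0|Hc0] := Z.eq_dec c 0.
  case: HnF; constructor => //; apply: Hind => //.
  by move: E; rewrite Hc0 /= !madd0.
have [|Hl Hr] := @gp_comb_free_vanish I cs (map (map_pair f) ps) j.
  by move=> _ /in_map_iff [p [<- Hp]]; exact: Hps p Hp.
have [f0 fD] := f_hom.
have := congr1 (fun z => proj1_sig (f z) j) E.
rewrite /= !fD !(hom_nsmul f_hom) f0 (hom_gp_comb_lhs f_hom) (hom_gp_comb_rhs f_hom).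
by rewrite /= !nsmul_free Hl Hr /=; nia.
Qed.

Definition restrict_free (I : Type) (S : seq I) (x : free_cmonoid I) : freeN (size S) :=
  [ffun i => proj1_sig x (tnth (in_tuple S) i)].

Lemma restrict_free_hom (I : Type) (S : seq I) : is_hom (restrict_free S).
Proof. by split=> [|x y]; apply/ffunP => i; rewrite !ffunE. Qed.

Lemma restrict_free_inj (I : Type) (S : seq I) (x y : free_cmonoid I) :
  (forall j, ~ In j S -> proj1_sig x j = 0) -> (forall j, ~ In j S -> proj1_sig y j = 0) ->
  restrict_free S x = restrict_free S y -> x = y.
Proof.
move=> Hx Hy /ffunP Exy; apply: sig_eq_pi; apply: functional_extensionality => j.
have [HjS|HjS] := classic (In j S); last by rewrite Hx ?Hy.
have [n [/ltP Hn <-]] := In_nth S j j HjS.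
by have := Exy (Ordinal Hn); rewrite !ffunE (tnth_nth j) /= -List_nthE.
Qed.

Lemma embeds_freeN_of_finite_rank (M : cmonoid) (I : Type) :
  finite_rank M -> embeds M (free_cmonoid I) -> exists d, embeds M (freeN d).
Proof.
move=> [r [[ps [Hs Hind]] Hmax]] [f [f_hom f_inj]].
have [S HS] := finsupp_pairs (map (map_pair f) ps).
have Hoff x j : ~ In j S -> proj1_sig (f x) j = 0.
  move=> HjS; apply: hom_free_vanish_off f_hom Hind _ _.
  - by move/Hmax; rewrite /= Hs; lia.
  - by move=> p Hp; exact: HS _ _ (in_map (map_pair f) _ _ Hp) HjS.
exists (size S), (restrict_free S \o f); split; first exact: hom_comp (restrict_free_hom S).
by move=> x y /(restrict_free_inj (Hoff x) (Hoff y)) /f_inj.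
Qed.

Theorem mainTheorem1 (M : cmonoid) :
  ((exists d : nat, embeds M (freeN d)) <->
   (finite_rank M /\ exists I : Type, embeds M (free_cmonoid I))) /\
  ((finite_rank M /\ exists I : Type, embeds M (free_cmonoid I)) <->
   (exists (d : nat) (P : freeN d -> Prop) (H0 : P (mzero (freeN d)))
           (HD : forall x y, P x -> P y -> P (madd x y)),
      has_rank (submonoid H0 HD) d /\ isomorphic M (submonoid H0 HD))).
Proof.
have a_to_b : (exists d, embeds M (freeN d)) ->
    finite_rank M /\ exists I : Type, embeds M (free_cmonoid I).
  move=> [d Hd]; split; first exact: finite_rank_of_embeds_freeN Hd.
  by exists 'I_d; exact: embeds_trans Hd (freeN_embeds_free d).
have b_to_a : finite_rank M /\ (exists I : Type, embeds M (free_cmonoid I)) ->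
    exists d, embeds M (freeN d).
  by move=> [Hr [I HI]]; exact: embeds_freeN_of_finite_rank Hr HI.
split; first by split.
split.
  move=> /b_to_a [d] /embeds_freeN_full_rank [r [Hr [f [f_hom f_inj]]]].
  have [P [H0 [HD [g [h [g_hom [gK hK]]]]]]] := isomorphic_image f_hom f_inj.
  by exists r, P, H0, HD; split; [exact: has_rank_iso g_hom gK hK Hr | exists g, h].
move=> [d [P [H0 [HD [_ Hiso]]]]]; apply: a_to_b; exists d.
exact: embeds_trans (isomorphic_embeds Hiso) (submonoid_embeds H0 HD).
Qed.
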